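(* Let $\mathcal P_2$ be an $\varepsilon$-additive-approximate short path between nodes $u_0$ and $u_1$, and suppose there is a node $v$ on a shortest path between $u_0$ and $u_1$ such that $\min_{v'\in\mathcal P_2}d_{v,v'}\ge\gamma$. Then, with $\delta=\delta_{\mathrm{worst}}(G)$, $$\varepsilon>\frac{2^{\gamma/(6\delta+1)}}{48\delta+\frac{17}{2}}-\log_2(48\delta+8).$$
   Context: $G=(V,E)$ is a finite connected undirected graph with $n\ge 4$ nodes and $d_{u,v}$ denotes the shortest-path distance (number of edges). For any four nodes $w_1,\dots,w_4$, order the three sums $d_{w_1,w_2}+d_{w_3,w_4}$, $d_{w_1,w_3}+d_{w_2,w_4}$, $d_{w_1,w_4}+d_{w_2,w_3}$ as $S\le M\le L$ and set $\delta_{w_1,w_2,w_3,w_4}=(L-M)/2$; $\delta_{\mathrm{worst}}(G)=\max\delta_{w_1,w_2,w_3,w_4}$. A path $(w_0,\dots,w_k)$ is $\varepsilon$-additive-approximate short if its length (number of edges) is at most $d_{w_0,w_k}+\varepsilon$. *)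

From Stdlib Require Import Reals List.
Import ListNotations.
Open Scope R_scope.

Section Graphs.
Variable V : Type.
Variable adj : V -> V -> Prop.

Definition simple_undirected : Prop :=
  (forall x y, adj x y -> adj y x) /\ (forall x, ~ adj x x).

Definition finite_at_least4 : Prop :=
  exists l : list V, NoDup l /\ (forall x, In x l) /\ (4 <= length l)%nat.

Fixpoint is_walk (p : list V) : Prop :=
  match p with
  | x :: ((y :: _) as t) => adj x y /\ is_walk t
  | _ => True
  end.

Definition walk_between (u v : V) (p : list V) : Prop :=
  is_walk p /\ hd_error p = Some u /\ last p u = v.

Definition walk_len (p : list V) : nat := (length p - 1)%nat.

Definition connected : Prop :=
  forall u v, exists p, walk_between u v p.

Definition is_graph_distance (d : V -> V -> nat) : Prop :=
  forall u v,
    (exists p, walk_between u v p /\ walk_len p = d u v) /\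
    (forall p, walk_between u v p -> (d u v <= walk_len p)%nat).

Definition on_shortest_path (d : V -> V -> nat) (u0 u1 v : V) : Prop :=
  exists p, walk_between u0 u1 p /\ walk_len p = d u0 u1 /\ In v p.

Definition approx_short (d : V -> V -> nat) (eps : R) (u0 u1 : V) (p : list V)
  : Prop :=
  walk_between u0 u1 p /\ INR (walk_len p) <= INR (d u0 u1) + eps.

(* four-point delta: with S <= M <= L the three pair sums, (L - M)/2 *)
Definition delta_quad (d : V -> V -> nat) (w1 w2 w3 w4 : V) : R :=
  let s1 := INR (d w1 w2 + d w3 w4) in
  let s2 := INR (d w1 w3 + d w2 w4) in
  let s3 := INR (d w1 w4 + d w2 w3) in
  let L := Rmax s1 (Rmax s2 s3) in
  let S := Rmin s1 (Rmin s2 s3) in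
  let M := s1 + s2 + s3 - L - S in
  (L - M) / 2.

Definition is_delta_worst (d : V -> V -> nat) (delta : R) : Prop :=
  (forall w1 w2 w3 w4, delta_quad d w1 w2 w3 w4 <= delta) /\
  (exists w1 w2 w3 w4, delta_quad d w1 w2 w3 w4 = delta).

End Graphs.

Arguments is_walk {V} adj p.
Arguments walk_between {V} adj u v p.
Arguments walk_len {V} p.

(* Write (x|y) for twice the Gromov product at v, and let the approximate path be
   f 0 = u0, ..., f m = u1.  Consecutive path points are adjacent and at distance at least
   gamma from v, so (f t | f (t+1)) >= 2 gamma - 1; splitting a stretch of N steps
   dyadically, each level of the four-point condition costs only 2 delta, whence
   (f i | f j) >= 2 gamma - 1 - 2 delta k with 2^k <= 2 |j - i| + 1.  Choosing f i and f j at
   the same distance from u0, resp. u1, as v forces |j - i| <= eps, while (u0|u1) = 0 because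
   v is on a geodesic.  Two more applications of the four-point condition then give
   gamma <= (6 delta + 1) (k + 1), i.e. 2^(gamma / (6 delta + 1)) <= 2 + 4 eps. *)

From Stdlib Require Import Reals List Lra Lia Arith.
Import ListNotations.
Open Scope R_scope.

Section Walks.
Variables (V : Type) (adj : V -> V -> Prop).

Lemma last_cons_default (a : V) l x y : last (a :: l) x = last (a :: l) y.
Proof. revert a; induction l as [|b l IH]; intros a; [reflexivity | apply IH]. Qed.

Lemma walk_len_cons (x w : V) r : walk_len (x :: w :: r) = S (walk_len (w :: r)).
Proof. unfold walk_len; simpl; lia. Qed.

Lemma walk_between_inv x y p : walk_between adj x y p ->
  (p = [x] /\ x = y) \/
  exists w r, p = x :: w :: r /\ adj x w /\ walk_between adj w y (w :: r).
Proof.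
  intros (Hw & Hh & Hl).
  destruct p as [|x' [|w r]]; try discriminate; injection Hh as ->.
  - now left.
  - right; exists w, r; destruct Hw as [Hxw Hw].
    repeat split; auto. rewrite <- Hl; exact (last_cons_default w r w x).
Qed.

Lemma walk_between_cons x y z q :
  adj x y -> walk_between adj y z q -> walk_between adj x z (x :: q).
Proof.
  intros Hxy (Hw & Hh & Hl).
  destruct q as [|y' q]; [discriminate|]; injection Hh as ->.
  repeat split; auto. rewrite <- Hl; exact (last_cons_default y q x y).
Qed.

Lemma walk_between_nth x y p z : walk_between adj x y p ->
  nth 0 p z = x /\ nth (walk_len p) p z = y /\
  (forall t, (t < walk_len p)%nat -> adj (nth t p z) (nth (S t) p z)) /\
  (forall t, (t <= walk_len p)%nat -> In (nth t p z) p).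
Proof.
  revert x; induction p as [|x' p IH]; intros x Hp.
  { destruct (walk_between_inv x y [] Hp) as [[E _] | (w & r & E & _)]; discriminate. }
  destruct (walk_between_inv x y _ Hp) as [[[= -> ->] ->] | (w & r & [= -> ->] & Hxw & Hw)].
  - unfold walk_len; simpl; repeat split; intros t Ht; [lia|].
    replace t with 0%nat by lia; now left.
  - destruct (IH w Hw) as (H0 & Hm & Hadj & Hin).
    rewrite walk_len_cons; repeat split; auto.
    + intros [|t] Ht; [exact Hxw | apply Hadj; lia].
    + intros [|t] Ht; [now left | right; apply Hin; lia].
Qed.

End Walks.

Section Distance.
Variables (V : Type) (adj : V -> V -> Prop) (d : V -> V -> nat).
Hypothesis Hd : is_graph_distance V adj d.
Hypothesis adj_sym : forall x y, adj x y -> adj y x.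

Lemma dist_refl x : d x x = 0%nat.
Proof.
  assert (Hx : walk_between adj x x [x]) by (repeat split).
  pose proof (proj2 (Hd x x) _ Hx) as H; unfold walk_len in H; simpl in H; lia.
Qed.

Lemma dist_cons_le x y z : adj x y -> (d x z <= S (d y z))%nat.
Proof.
  intros Hxy; destruct (proj1 (Hd y z)) as (q & Hq & Hlen).
  pose proof (proj2 (Hd x z) _ (walk_between_cons V adj x y z q Hxy Hq)) as H.
  destruct Hq as (_ & Hh & _); destruct q as [|y' q]; [discriminate|].
  unfold walk_len in *; simpl in *; lia.
Qed.

Lemma dist_walk_le x y z p :
  walk_between adj x y p -> (d x z <= walk_len p + d y z)%nat.
Proof.
  revert x; induction p as [|x' p IH]; intros x Hp;
  destruct (walk_between_inv V adj x y _ Hp)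
    as [[[= -> ->] ->] | (w & r & [= -> ->] & Hxw & Hw)].
  - unfold walk_len; simpl; lia.
  - rewrite walk_len_cons; pose proof (IH w Hw); pose proof (dist_cons_le x w z Hxw); lia.
Qed.

Lemma dist_triangle x y z : (d x z <= d x y + d y z)%nat.
Proof.
  destruct (proj1 (Hd x y)) as (p & Hp & <-); exact (dist_walk_le x y z p Hp).
Qed.

Lemma dist_adj_le1 x y : adj x y -> (d x y <= 1)%nat.
Proof. intros Hxy; pose proof (dist_cons_le x y y Hxy); rewrite dist_refl in *; lia. Qed.

Lemma dist_walk_rev_le x y p : walk_between adj x y p -> (d y x <= walk_len p)%nat.
Proof.
  revert x; induction p as [|x' p IH]; intros x Hp;
  destruct (walk_between_inv V adj x y _ Hp)
    as [[[= -> ->] ->] | (w & r & [= -> ->] & Hxw & Hw)].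
  - rewrite dist_refl; lia.
  - rewrite walk_len_cons; pose proof (IH w Hw); pose proof (dist_triangle y w x).
    pose proof (dist_adj_le1 w x (adj_sym x w Hxw)); lia.
Qed.

Lemma dist_sym x y : d x y = d y x.
Proof.
  assert (Hle : forall a b, (d b a <= d a b)%nat).
  { intros a b; destruct (proj1 (Hd a b)) as (p & Hp & <-); exact (dist_walk_rev_le a b p Hp). }
  pose proof (Hle x y); pose proof (Hle y x); lia.
Qed.

Section Path.
Variables (f : nat -> V) (m : nat).
Hypothesis f_adj : forall t, (t < m)%nat -> adj (f t) (f (S t)).

Lemma path_dist_step z t : (t < m)%nat ->
  (d z (f (S t)) <= S (d z (f t)) /\ d z (f t) <= S (d z (f (S t))))%nat.
Proof.
  intros Ht; pose proof (dist_adj_le1 _ _ (f_adj t Ht)).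
  pose proof (dist_triangle z (f t) (f (S t))); pose proof (dist_triangle z (f (S t)) (f t)).
  rewrite (dist_sym (f (S t))) in *; lia.
Qed.

Lemma path_dist_le i j : (i <= j <= m)%nat -> (d (f i) (f j) <= j - i)%nat.
Proof.
  intros [Hij Hjm]; induction j as [|j IH].
  - replace i with 0%nat by lia; rewrite dist_refl; lia.
  - destruct (Nat.eq_dec i (S j)) as [->|Hne]; [rewrite dist_refl; lia|].
    pose proof (IH ltac:(lia) ltac:(lia)); pose proof (path_dist_step (f i) j ltac:(lia)); lia.
Qed.

End Path.

Lemma on_shortest_path_dist u0 u1 v :
  on_shortest_path V adj d u0 u1 v -> (d u0 v + d v u1 <= d u0 u1)%nat.
Proof.
  intros (p & Hp & Hlen & Hv).
  destruct (In_nth p v u0 Hv) as (k & Hk & Hkv).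
  destruct (walk_between_nth V adj u0 u1 p u0 Hp) as (H0 & Hm & Hadj & _).
  assert (Hkm : (k <= walk_len p)%nat) by (unfold walk_len; lia).
  pose proof (path_dist_le _ _ Hadj 0 k ltac:(lia)) as H1.
  pose proof (path_dist_le _ _ Hadj k (walk_len p) ltac:(lia)) as H2.
  cbv beta in H1, H2; rewrite H0, Hm, Hkv in *; lia.
Qed.

End Distance.

Definition gromov2 {V : Type} (d : V -> V -> nat) (v x y : V) : R :=
  INR (d v x) + INR (d v y) - INR (d x y).

Section FourPoint.
Variables (V : Type) (d : V -> V -> nat) (delta : R).
Hypothesis d_sym : forall x y, d x y = d y x.
Hypothesis Hdelta : is_delta_worst V d delta.

Lemma delta_quad_spec w1 w2 w3 w4 : 0 <= delta_quad V d w1 w2 w3 w4 /\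
  (INR (d w1 w2 + d w3 w4) <= INR (d w1 w3 + d w2 w4) + 2 * delta_quad V d w1 w2 w3 w4 \/
   INR (d w1 w2 + d w3 w4) <= INR (d w1 w4 + d w2 w3) + 2 * delta_quad V d w1 w2 w3 w4).
Proof.
  unfold delta_quad; cbv zeta.
  generalize (INR (d w1 w2 + d w3 w4)) (INR (d w1 w3 + d w2 w4)) (INR (d w1 w4 + d w2 w3)).
  intros s1 s2 s3; unfold Rmax, Rmin; destruct (Rle_dec s2 s3) as [|?%Rnot_le_lt];
  repeat match goal with |- context [Rle_dec ?a ?b] => destruct (Rle_dec a b) as [|?%Rnot_le_lt] end;
  lra.
Qed.

Lemma delta_worst_nonneg : 0 <= delta.
Proof. destruct Hdelta as [_ (w1 & w2 & w3 & w4 & <-)]; apply delta_quad_spec. Qed.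

Lemma gromov2_sym v x y : gromov2 d v x y = gromov2 d v y x.
Proof. unfold gromov2; rewrite (d_sym x y); lra. Qed.

Lemma gromov2_four_point v x y z :
  gromov2 d v x y <= gromov2 d v x z + 2 * delta \/
  gromov2 d v y z <= gromov2 d v x z + 2 * delta.
Proof.
  pose proof (proj1 Hdelta x z y v) as Hq.
  destruct (proj2 (delta_quad_spec x z y v)) as [H | H];
  rewrite !plus_INR, ?(d_sym y v), ?(d_sym z v), ?(d_sym x v), ?(d_sym z y) in H;
  unfold gromov2; [left | right]; lra.
Qed.

Lemma gromov2_chain_dyadic v (f : nat -> V) (c : R) k : forall i N,
  (1 <= N <= 2 ^ k)%nat ->
  (forall t, (i <= t < i + N)%nat -> c <= gromov2 d v (f t) (f (S t))) ->
  c - 2 * delta * INR k <= gromov2 d v (f i) (f (i + N)%nat).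
Proof.
  pose proof delta_worst_nonneg.
  induction k as [|k IH]; intros i N HN Hstep.
  - replace N with 1%nat in * by (simpl in HN; lia).
    rewrite Nat.add_1_r; specialize (Hstep i ltac:(lia)); simpl; lra.
  - rewrite S_INR; pose proof (pos_INR k); rewrite Nat.pow_succ_r' in HN.
    destruct (le_lt_dec N (2 ^ k)) as [Hle | Hlt].
    + specialize (IH i N ltac:(lia) Hstep); nra.
    + (* split at the dyadic midpoint i + 2^k and apply the four-point condition there *)
      pose proof (IH i (2 ^ k)%nat ltac:(lia) ltac:(intros t Ht; apply Hstep; lia)) as H1.
      pose proof (IH (i + 2 ^ k)%nat (N - 2 ^ k)%nat ltac:(lia)
                    ltac:(intros t Ht; apply Hstep; lia)) as H2.
      replace (i + 2 ^ k + (N - 2 ^ k))%nat with (i + N)%nat in H2 by lia.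
      destruct (gromov2_four_point v (f i) (f (i + 2 ^ k)%nat) (f (i + N)%nat)); lra.
Qed.

Lemma gromov2_chain v (f : nat -> V) (c : R) i N : (1 <= N)%nat ->
  (forall t, (i <= t < i + N)%nat -> c <= gromov2 d v (f t) (f (S t))) ->
  exists k, (2 ^ k <= 2 * N)%nat /\ c - 2 * delta * INR k <= gromov2 d v (f i) (f (i + N)%nat).
Proof.
  intros HN Hstep; destruct (Nat.log2_spec N HN) as [Hlo Hhi].
  exists (S (Nat.log2 N)); split; [rewrite Nat.pow_succ_r'; lia|].
  apply gromov2_chain_dyadic; [lia | exact Hstep].
Qed.

End FourPoint.

Lemma nat_ivt (g : nat -> nat) m a :
  (forall t, (t < m)%nat -> (g (S t) <= S (g t) /\ g t <= S (g (S t)))%nat) ->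
  (Nat.min (g 0%nat) (g m) <= a <= Nat.max (g 0%nat) (g m))%nat ->
  exists j, (j <= m)%nat /\ g j = a.
Proof.
  induction m as [|m IH]; intros Hstep Ha; [exists 0%nat; lia|].
  destruct (Nat.eq_dec (g (S m)) a) as [E | Hne]; [exists (S m); lia|].
  pose proof (Hstep m ltac:(lia)).
  destruct IH as [j Hj]; [intros t Ht; apply Hstep; lia | lia | exists j; lia].
Qed.

Section FarPath.
Variables (V : Type) (adj : V -> V -> Prop) (d : V -> V -> nat) (delta gamma : R).
Hypothesis Hd : is_graph_distance V adj d.
Hypothesis adj_sym : forall x y, adj x y -> adj y x.
Hypothesis Hdelta : is_delta_worst V d delta.
Variables (f : nat -> V) (m : nat) (u0 u1 v : V).
Hypothesis f_adj : forall t, (t < m)%nat -> adj (f t) (f (S t)).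
Hypothesis f_0 : f 0%nat = u0.
Hypothesis f_m : f m = u1.
Hypothesis v_between : (d u0 v + d v u1 <= d u0 u1)%nat.
Hypothesis f_far : forall t, (t <= m)%nat -> gamma <= INR (d v (f t)).

Let d_sym := dist_sym V adj d Hd adj_sym.
Let d_refl := dist_refl V adj d Hd.
Let d_tri := dist_triangle V adj d Hd.
Let path_le := path_dist_le V adj d Hd adj_sym f m f_adj.
Let path_step := path_dist_step V adj d Hd adj_sym f m f_adj.

Lemma far_path_anchors : exists i j, (i <= m)%nat /\ (j <= m)%nat /\
  d u0 (f i) = d u0 v /\ d u1 (f j) = d u1 v /\
  (j <= i + (m - d u0 u1))%nat /\ (i <= j + (m - d u0 u1))%nat.
Proof.
  pose proof (path_le 0 m ltac:(lia)) as Hnm; rewrite f_0, f_m in Hnm.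
  pose proof (d_tri u0 v u1).
  destruct (nat_ivt (fun t => d u0 (f t)) m (d u0 v)) as (i & Hi & Hfi).
  { intros t Ht; apply path_step, Ht. }
  { rewrite f_0, f_m, d_refl; lia. }
  destruct (nat_ivt (fun t => d u1 (f t)) m (d u1 v)) as (j & Hj & Hfj).
  { intros t Ht; apply path_step, Ht. }
  { rewrite f_0, f_m, d_refl, (d_sym u1 u0), (d_sym u1 v); lia. }
  exists i, j; repeat split; auto.
  all: pose proof (path_le 0 i ltac:(lia)); pose proof (path_le i m ltac:(lia));
       pose proof (path_le 0 j ltac:(lia)); pose proof (path_le j m ltac:(lia));
       pose proof (d_tri u0 (f i) u1);
       pose proof (d_tri u0 (f j) u1);
       cbv beta in *; rewrite f_0, f_m, ?(d_sym u1 v), ?(d_sym u1 (f j)) in *; lia.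
Qed.

Lemma far_path_gromov i N : (i + N <= m)%nat -> exists k, (2 ^ k <= 2 * N + 1)%nat /\
  2 * gamma - 1 - 2 * delta * INR k <= gromov2 d v (f i) (f (i + N)%nat).
Proof.
  intros HN; destruct N as [|N].
  - exists 0%nat; split; [simpl; lia|].
    rewrite Nat.add_0_r; unfold gromov2; rewrite d_refl; pose proof (f_far i ltac:(lia)).
    simpl; lra.
  - destruct (gromov2_chain V d delta d_sym Hdelta v f (2 * gamma - 1) i (S N))
      as (k & Hk & Hchain); [lia| |exists k; split; [lia | exact Hchain]].
    intros t Ht; pose proof (f_far t ltac:(lia)); pose proof (f_far (S t) ltac:(lia)).
    pose proof (le_INR _ _ (dist_adj_le1 V adj d Hd _ _ (f_adj t ltac:(lia)))).
    unfold gromov2; simpl in *; lra.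
Qed.

(* The four-point condition at (u0, f i, u1) and (f i, f j, u1), where
   [gromov2 v u0 u1 <= 0] since [v] lies between [u0] and [u1]. *)
Lemma far_path_exponent : exists k, gamma <= (6 * delta + 1) * INR (S k) /\
  (2 ^ k <= 2 * (m - d u0 u1) + 1)%nat.
Proof.
  destruct far_path_anchors as (i & j & Hi & Hj & Hfi & Hfj & Hji & Hij).
  assert (Hgap : exists k, (2 ^ k <= 2 * (m - d u0 u1) + 1)%nat /\
            2 * gamma - 1 - 2 * delta * INR k <= gromov2 d v (f i) (f j)).
  { destruct (le_lt_dec i j).
    - destruct (far_path_gromov i (j - i) ltac:(lia)) as (k & Hk & Hg).
      exists k; split; [lia|]; replace (i + (j - i))%nat with j in Hg by lia; exact Hg.
    - destruct (far_path_gromov j (i - j) ltac:(lia)) as (k & Hk & Hg).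
      exists k; split; [lia|]; replace (j + (i - j))%nat with i in Hg by lia.
      rewrite gromov2_sym by exact d_sym; exact Hg. }
  destruct Hgap as (k & Hk & Hg); exists k; split; [|exact Hk].
  assert (G0 : gromov2 d v u0 u1 <= 0).
  { unfold gromov2; rewrite (d_sym v u0); apply le_INR in v_between.
    rewrite plus_INR in v_between; lra. }
  assert (G1 : gamma <= gromov2 d v u0 (f i)).
  { unfold gromov2; rewrite (d_sym v u0), Hfi; pose proof (f_far i Hi); lra. }
  assert (G2 : gamma <= gromov2 d v (f j) u1).
  { unfold gromov2; rewrite (d_sym u1 (f j)), (d_sym u1 v) in Hfj; rewrite Hfj.
    pose proof (f_far j Hj); lra. }
  pose proof (delta_worst_nonneg V d delta Hdelta); pose proof (pos_INR k).
  assert (0 <= delta * INR k) by (apply Rmult_le_pos; assumption).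
  rewrite S_INR.
  destruct (gromov2_four_point V d delta d_sym Hdelta v u0 (f i) u1);
  [|destruct (gromov2_four_point V d delta d_sym Hdelta v (f i) (f j) u1)]; nra.
Qed.

End FarPath.

Lemma Rpower2_le_pow x k : x <= INR k -> Rpower 2 x <= 2 ^ k.
Proof. intros Hx; rewrite <- Rpower_pow by lra; apply Rle_Rpower; lra. Qed.

Lemma log2_ge_3 delta : 0 <= delta -> 3 <= ln (48 * delta + 8) / ln 2.
Proof.
  intros Hdelta.
  assert (Hln2 : 0 < ln 2) by (rewrite <- ln_1; apply ln_increasing; lra).
  assert (Hln8 : ln 8 = 3 * ln 2) by (replace 8 with (2 ^ 3) by lra; rewrite ln_pow by lra; simpl; lra).
  assert (ln 8 <= ln (48 * delta + 8)).
  { destruct (Req_dec delta 0) as [-> | Hne]; [right; f_equal; lra|].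
    left; apply ln_increasing; lra. }
  apply Rmult_le_reg_r with (ln 2); [exact Hln2|].
  unfold Rdiv; rewrite Rmult_assoc, Rinv_l by lra; lra.
Qed.

Lemma exponential_bound_slack delta eps x : 0 <= delta -> 0 <= eps ->
  Rpower 2 x <= 2 + 8 * eps ->
  eps > Rpower 2 x / (48 * delta + 17 / 2) - ln (48 * delta + 8) / ln 2.
Proof.
  intros Hdelta Heps Hx; pose proof (log2_ge_3 delta Hdelta).
  assert (Hpos : 0 < Rpower 2 x) by apply exp_pos.
  assert (Rpower 2 x / (48 * delta + 17 / 2) <= Rpower 2 x / (17 / 2)).
  { unfold Rdiv; apply Rmult_le_compat_l; [lra|]; apply Rinv_le_contravar; lra. }
  lra.
Qed.


Theorem corollary8 (V : Type) (adj : V -> V -> Prop) (d : V -> V -> nat)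
  (delta eps gamma : R) (u0 u1 v : V) (P2 : list V) :
  simple_undirected V adj ->
  finite_at_least4 V ->
  connected V adj ->
  is_graph_distance V adj d ->
  is_delta_worst V d delta ->
  approx_short V adj d eps u0 u1 P2 ->
  on_shortest_path V adj d u0 u1 v ->
  (forall v', In v' P2 -> gamma <= INR (d v v')) ->
  eps > Rpower 2 (gamma / (6 * delta + 1)) / (48 * delta + 17 / 2)
        - ln (48 * delta + 8) / ln 2.
Proof.
  intros [adj_sym _] _ _ Hd Hdelta [HP2 Hlen] Hv Hfar.
  destruct (walk_between_nth V adj u0 u1 P2 u0 HP2) as (f_0 & f_m & f_adj & f_in).
  pose proof (delta_worst_nonneg V d delta Hdelta) as Hdelta0.
  destruct (far_path_exponent V adj d delta gamma Hd adj_sym Hdelta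
              (fun t => nth t P2 u0) (walk_len P2) u0 u1 v f_adj f_0 f_m
              (on_shortest_path_dist V adj d Hd adj_sym u0 u1 v Hv)
              (fun t Ht => Hfar _ (f_in t Ht))) as (k & Hk & H2k).
  pose proof (proj2 (Hd u0 u1) _ HP2) as Hshort.
  apply le_INR in H2k.
  rewrite plus_INR, mult_INR, minus_INR, pow_INR in H2k by exact Hshort.
  replace (INR 2) with 2 in H2k by (simpl; lra); change (INR 1) with 1 in H2k.
  apply le_INR in Hshort.
  apply exponential_bound_slack; [exact Hdelta0 | lra|].
  eapply Rle_trans; [apply Rpower2_le_pow with (k := S k)|].
  - apply Rmult_le_reg_r with (6 * delta + 1); [lra|].
    unfold Rdiv; rewrite Rmult_assoc, Rinv_l by lra; lra.
  - cbn [pow]; lra.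
Qed.
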